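(* Let $R$ be a finite ring with unity having $n$ elements. If there exist elements $x_1,\ldots,x_m\in R$ such that $x_i-x_j$ is a unit of $R$ for all distinct $i,j$, then there exist $n\times n$ monomial $(0,1)$-matrices $K_{i,j}$, $i,j\in\{1,\ldots,m\}$, such that $\sum_{l=1}^mK_{i,l}K_{j,l}^\top$ is a $(0,1)$-matrix for all distinct $i,j\in\{1,\ldots,m\}$.
   Context: A monomial $(0,1)$-matrix is a permutation matrix (exactly one entry $1$ in each row and each column, all other entries $0$). *)

From HB Require Import structures.
From mathcomp Require Import all_boot all_order all_algebra all_fingroup.
Set Implicit Arguments. Unset Strict Implicit. Unset Printing Implicit Defensive.
Import GRing.Theory.
Local Open Scope ring_scope.

Definition is01_mx (n : nat) (A : 'M[int]_n) : Prop :=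
  forall a b : 'I_n, A a b = 0 \/ A a b = 1.

(** Index the rows of an [n x n] matrix by the elements of [R] and let [K i l]
    be the permutation matrix of the translation [r |-> r + x_i x_l].  The
    [(a, b)] entry of [K i l *m (K j l)^T] is [1] exactly when
    [a + x_i x_l = b + x_j x_l].  Two such indices [l, l'] would give
    [(x_i - x_j) (x_l - x_l') = 0], hence [x_l = x_l'] because [x_i - x_j] is a
    unit, hence [l = l']; so each entry of the sum over [l] is [0] or [1]. *)

From HB Require Import structures.
From mathcomp Require Import all_boot all_order all_algebra all_fingroup.
Set Implicit Arguments.
Unset Strict Implicit.
Unset Printing Implicit Defensive.

Local Open Scope ring_scope.
Import GRing.Theory.

Lemma mul_perm_mx_trmx_entry (R : pzRingType) (n : nat) (s t : {perm 'I_n}) a b :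
  ((perm_mx s : 'M[R]_n) *m (perm_mx t)^T) a b = (s a == t b)%:R.
Proof.
rewrite !mxE (bigD1 (s a)) //= big1 ?addr0.
  by rewrite !mxE eqxx mul1r eq_sym.
by move=> c /negbTE sa_c; rewrite !mxE eq_sym sa_c mul0r.
Qed.

Lemma sum_indicator_01 (I : finType) (P : pred I) :
  (forall l l', P l -> P l' -> l = l') ->
  \sum_(l : I) (P l)%:R = 0 :> int \/ \sum_(l : I) (P l)%:R = 1 :> int.
Proof.
move=> P_uniq.
have -> : \sum_(l : I) (P l)%:R = #|P|%:R :> int.
  rewrite (eq_bigr (fun l => if P l then 1 else 0)) => [|l _]; last by case: (P l).
  by rewrite -big_mkcond sumr_const.
have : (#|P| <= 1)%N by apply/card_le1_eqP => l l' Pl Pl'; apply: P_uniq.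
by case: #|P| => [|[|]] //= _; [left | right].
Qed.

Section Translation.
Variable V : finZmodType.

Definition transl_ord (c : V) (k : 'I_#|V|) : 'I_#|V| := enum_rank (enum_val k + c).

Lemma transl_ord_inj (c : V) : injective (transl_ord c).
Proof. by move=> a b /enum_rank_inj /addIr /enum_val_inj. Qed.

Definition transl_perm (c : V) : {perm 'I_#|V|} := perm (@transl_ord_inj c).

Lemma mul_transl_perm_mx_entry (c d : V) a b :
  ((perm_mx (transl_perm c) : 'M[int]_#|V|) *m (perm_mx (transl_perm d))^T) a b
    = (enum_val a + c == enum_val b + d)%:R.
Proof. by rewrite mul_perm_mx_trmx_entry !permE /transl_ord (inj_eq enum_rank_inj). Qed.

End Translation.

Lemma affine_eq_unit_slope (R : unitRingType) (p q a b y z : R) :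
  (p - q) \is a GRing.unit -> a + p * y = b + q * y -> a + p * z = b + q * z ->
  y = z.
Proof.
move=> pq_unit eq_y eq_z; apply/eqP; rewrite -subr_eq0.
have : (p - q) * (y - z) = 0.
  have p_diff : p * (y - z) = (a + p * y) - (a + p * z) by rewrite mulrBr [a + _]addrC addrKA.
  have q_diff : q * (y - z) = (b + q * y) - (b + q * z) by rewrite mulrBr [b + _]addrC addrKA.
  by rewrite mulrBl p_diff q_diff eq_y eq_z subrr.
by move/eqP; rewrite mulrI_eq0 //; exact: mulrI.
Qed.

Lemma unit_diff_inj (R : unitRingType) (I : eqType) (x : I -> R) :
  (forall i j, i != j -> (x i - x j) \is a GRing.unit) -> injective x.
Proof.
move=> x_unit i j xij; apply/eqP; apply: contraT => /x_unit.
by rewrite xij subrr unitr0.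
Qed.

Theorem lemma4p1 (R : finUnitRingType) (m : nat) :
  (exists x : 'I_m -> R, forall i j : 'I_m, i != j -> (x i - x j) \is a GRing.unit) ->
  exists K : 'I_m -> 'I_m -> 'M[int]_#|R|,
    (forall i l : 'I_m, is_perm_mx (K i l)) /\
    (forall i j : 'I_m, i != j -> is01_mx (\sum_(l < m) K i l *m (K j l)^T)).
Proof.
case=> x x_unit.
exists (fun i l => perm_mx (transl_perm (x i * x l))); split.
  by move=> i l; exact: perm_mx_is_perm.
move=> i j ij a b; rewrite summxE.
under eq_bigr => l _ do rewrite mul_transl_perm_mx_entry.
apply: sum_indicator_01 => l l' /eqP eq_l /eqP eq_l'.
apply: (unit_diff_inj x_unit).
exact: affine_eq_unit_slope (x_unit _ _ ij) eq_l eq_l'.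
Qed.
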